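(* Let $G$ be a finite digraph with blocks $B_1,\dots,B_k$, and suppose $G$ has exactly $t$ cut-vertices $v^c_1,\dots,v^c_t$, with cut-indices $T(1),T(2),\dots,T(t)$ respectively. Then the number of $\mathcal{B}$-partitions of $G$ is $$\prod_{i=1}^{t} T(i).$$
   Context: A digraph $G=(V(G),E(G))$ consists of a finite vertex set $V(G)$ and an edge set $E(G)\subseteq V(G)\times V(G)$ (loops $(u,u)$ are allowed). A subdigraph $H$ of $G$ has $V(H)\subseteq V(G)$ and $E(H)\subseteq E(G)$; it is induced if whenever $u,v\in V(H)$ and $(u,v)\in E(G)$ then $(u,v)\in E(H)$. A digraph with empty vertex set is called a null graph. A path between $v_1$ and $v_k$ is a sequence of distinct vertices $v_1,\dots,v_k$ such that for each $i$, $(v_i,v_{i+1})\in E(G)$ or $(v_{i+1},v_i)\in E(G)$; $G$ is connected if any two distinct vertices are joined by a path, and a component is a maximal connected subdigraph. A cut-vertex of $G$ is a vertex whose removal increases the number of components. A block of $G$ is a maximal connected subdigraph of $G$ that has no cut-vertex (of itself). The cut-index of a cut-vertex $v$ of $G$ is the number of blocks of $G$ containing $v$. If $G$ has blocks $B_1,\dots,B_k$, a $\mathcal{B}$-partition of $G$ is a $k$-tuple $(\hat B_1,\dots,\hat B_k)$ of pairwise vertex-disjoint induced subdigraphs of $G$ whose vertex sets together cover $V(G)$, such that $\hat B_i$ is an (induced) subdigraph of $B_i$ for each $i=1,\dots,k$; some $\hat B_i$ may be null graphs. *)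

From mathcomp Require Import all_boot.
From mathcomp Require Import boolp.

Set Implicit Arguments.
Unset Strict Implicit.
Unset Printing Implicit Defensive.

Section Digraphs.
Variable V : finType.

(* A digraph on (a subset of) the finite vertex universe V:
   a vertex set and an edge set (loops allowed). *)
Definition dgraph := ({set V} * {set (V * V)})%type.

Definition vset (G : dgraph) : {set V} := G.1.
Definition eset (G : dgraph) : {set (V * V)} := G.2.

Definition is_digraph (G : dgraph) : bool :=
  [forall e in eset G, (e.1 \in vset G) && (e.2 \in vset G)].

Definition subdigraph (H G : dgraph) : bool :=
  [&& is_digraph H, vset H \subset vset G & eset H \subset eset G].

Definition induced_sub (H G : dgraph) : bool :=
  subdigraph H G &&
  [forall u in vset H, forall v in vset H,
      ((u, v) \in eset G) ==> ((u, v) \in eset H)].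

Definition adj (H : dgraph) : rel V :=
  fun u v => ((u, v) \in eset H) || ((v, u) \in eset H).

Definition joined (H : dgraph) (x y : V) : Prop :=
  exists s : seq V,
    [/\ uniq (x :: s), all (fun v => v \in vset H) (x :: s),
        path (adj H) x s & last x s = y].

Definition connected (H : dgraph) : Prop :=
  forall x y, x \in vset H -> y \in vset H -> x != y -> joined H x y.

Definition component (H G : dgraph) : Prop :=
  [/\ subdigraph H G, connected H &
      forall H', subdigraph H' G -> connected H' -> subdigraph H H' -> H' = H].

Definition ncomp (G : dgraph) : nat := #|[set H : dgraph | `[< component H G >]]|.

Definition del_vertex (G : dgraph) (v : V) : dgraph :=
  (vset G :\ v, [set e in eset G | (e.1 != v) && (e.2 != v)]).

Definition cut_vertex (G : dgraph) (v : V) : Prop :=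
  v \in vset G /\ ncomp G < ncomp (del_vertex G v).

Definition block_prop (H : dgraph) : Prop :=
  connected H /\ forall v, ~ cut_vertex H v.

Definition block (H G : dgraph) : Prop :=
  [/\ subdigraph H G, block_prop H &
      forall H', subdigraph H' G -> block_prop H' -> subdigraph H H' -> H' = H].

Definition cut_index (G : dgraph) (v : V) : nat :=
  #|[set H : dgraph | `[< block H G >] && (v \in vset H)]|.

Definition B_partition (G : dgraph) (k : nat) (B : 'I_k -> dgraph)
    (P : {ffun 'I_k -> dgraph}) : bool :=
  [&& [forall i, induced_sub (P i) G && subdigraph (P i) (B i)],
      [forall i, forall j, (i != j) ==> [disjoint vset (P i) & vset (P j)]] &
      \bigcup_(i < k) vset (P i) == vset G].

End Digraphs.

From mathcomp Require Import all_boot.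
From mathcomp Require Import boolp.

(* A B-partition is the same as a choice, for every vertex v of G, of one of the
   blocks containing v: the parts are the subdigraphs induced on the vertices
   sent to each block, and they are subdigraphs of their blocks because blocks
   are induced.  So B-partitions are counted by the product, over the vertices,
   of the number of blocks through them.  Every vertex lies in some block, and a
   vertex v in two distinct blocks B1, B2 is a cut-vertex: a path from B1 - v to
   B2 - v avoiding v would make B1, B2 and the path together a larger subdigraph
   without cut-vertex.  Hence only cut-vertices contribute factors other than 1,
   and they contribute their cut-indices. *)

Set Implicit Arguments.
Unset Strict Implicit.
Unset Printing Implicit Defensive.

Section Subgraphs.
Variable V : finType.
Implicit Types (G H K : dgraph V) (S : {set V}) (x y z w : V).

Lemma dgraph_eq H K : vset H = vset K -> eset H = eset K -> H = K.
Proof. by case: H K => ? ? [? ?] /= -> ->. Qed.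

Lemma is_digraphP G :
  reflect (forall e, e \in eset G -> (e.1 \in vset G) && (e.2 \in vset G))
          (is_digraph G).
Proof. exact: forall_inP. Qed.

Lemma subdigraph_wf H G : subdigraph H G -> is_digraph H.
Proof. by case/and3P. Qed.

Lemma subdigraph_refl G : is_digraph G -> subdigraph G G.
Proof. by rewrite /subdigraph !subxx => ->. Qed.

Lemma subdigraph_trans H K G :
  subdigraph H K -> subdigraph K G -> subdigraph H G.
Proof.
case/and3P=> wfH HKv HKe /and3P[_ KGv KGe].
by rewrite /subdigraph wfH (subset_trans HKv KGv) (subset_trans HKe KGe).
Qed.

Lemma subdigraph_anti H K : subdigraph H K -> subdigraph K H -> H = K.
Proof.
case/and3P=> _ HKv HKe /and3P[_ KHv KHe].
by apply: dgraph_eq; apply/eqP; rewrite eqEsubset ?HKv ?HKe.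
Qed.

Definition subg H K := (vset H \subset vset K) && (eset H \subset eset K).

Lemma subdigraph_subg H K : subdigraph H K -> subg H K.
Proof. by case/and3P=> _ HKv HKe; apply/andP. Qed.

Lemma is_digraph_del G w : is_digraph G -> is_digraph (del_vertex G w).
Proof.
move/is_digraphP => wfG; apply/is_digraphP => e; rewrite !inE => /andP[Ge /andP[-> ->]].
exact: wfG.
Qed.

Lemma subg_del G w : subg (del_vertex G w) G.
Proof. by apply/andP; split; apply/subsetP => x; rewrite !inE => /andP[]. Qed.

Lemma subg_del2 H K w : subg H K -> subg (del_vertex H w) (del_vertex K w).
Proof.
case/andP=> /subsetP HKv /subsetP HKe.
apply/andP; split; apply/subsetP => x; rewrite !inE.
  by case/andP=> -> /HKv.
by case/andP=> /HKe -> ->.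
Qed.

Lemma del_vertex_id H w : is_digraph H -> w \notin vset H -> del_vertex H w = H.
Proof.
move=> /is_digraphP wfH Hw.
apply: dgraph_eq; [apply/setP => x | apply/setP => e]; rewrite /= !inE.
  by case: eqVneq => // ->; rewrite (negbTE Hw).
case He: (e \in eset H) => //=; case/andP: (wfH e He) => He1 He2.
by apply/andP; split; apply: contraNneq Hw => <-.
Qed.

Definition induced G S : dgraph V :=
  (S, [set e in eset G | (e.1 \in S) && (e.2 \in S)]).

Lemma is_digraph_induced G S : is_digraph (induced G S).
Proof. by apply/is_digraphP => e; rewrite inE => /andP[]. Qed.

Lemma induced_subdigraph G S : S \subset vset G -> subdigraph (induced G S) G.
Proof.
move=> SG; rewrite /subdigraph is_digraph_induced SG.
by apply/subsetP => e; rewrite inE => /andP[].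
Qed.

Lemma subdigraph_induced H G S :
  subdigraph H G -> vset H \subset S -> subdigraph H (induced G S).
Proof.
case/and3P=> wfH HGv /subsetP HGe HS.
rewrite /subdigraph wfH HS; apply/subsetP => e He.
rewrite inE HGe //.
by case/andP: (is_digraphP _ wfH e He) => /(subsetP HS) -> /(subsetP HS) ->.
Qed.

End Subgraphs.

Section Connectivity.
Variable V : finType.
Implicit Types (G H K : dgraph V) (S : {set V}) (x y z w : V).

(* [joined] asks the path to stay inside V(H), hence the vertex tests. *)
Definition radj G : rel V :=
  fun x y => [&& x \in vset G, y \in vset G & adj G x y].

Lemma radj_sym G : symmetric (radj G).
Proof. by move=> x y; rewrite /radj /adj orbC andbCA. Qed.

Lemma connect_radjC G x y : connect (radj G) x y = connect (radj G) y x.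
Proof. exact: (sym_connect_sym (radj_sym G)). Qed.

Lemma path_radj_vset G x s : path (radj G) x s -> all (mem (vset G)) s.
Proof. by elim: s x => //= y s IH x /andP[/and3P[_ -> _] /IH]. Qed.

Lemma connect_radj_vset G x y :
  x \in vset G -> connect (radj G) x y -> y \in vset G.
Proof.
move=> Gx /connectP[s /path_radj_vset Gs ->].
by apply: (allP (_ : all (mem (vset G)) (x :: s))); rewrite ?mem_last //= Gx.
Qed.

Lemma joinedE H x y : joined H x y <-> x \in vset H /\ connect (radj H) x y.
Proof.
split.
  move=> [s [_ /= /andP[Hx Hs] p_s <-]]; split => //; apply/connectP; exists s => //.
  elim: s x Hx Hs p_s {y} => //= y s IH x Hx /andP[Hy Hs] /andP[xy p_s].
  by rewrite /radj Hx Hy xy IH.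
move=> [Hx /connectP[s p_s ->]]; case/shortenP: p_s => s' p_s' uniq_s' _.
exists s'; split => //=; first by rewrite Hx (path_radj_vset p_s').
by apply: sub_path p_s' => u u' /and3P[].
Qed.

Lemma connectedE H :
  connected H <-> {in vset H &, forall x y, connect (radj H) x y}.
Proof.
split=> [conH x y Hx Hy | conH x y Hx Hy _]; last by apply/joinedE; split; auto.
by case: (eqVneq x y) => [-> | /(conH x y Hx Hy) /joinedE[]].
Qed.

Lemma connectedP H :
  reflect (connected H) [forall x in vset H, forall y in vset H, connect (radj H) x y].
Proof.
apply: (iffP forall_inP) => [conH | /connectedE conH x Hx].
  by apply/connectedE => x y Hx /(forall_inP (conH x Hx)).
by apply/forall_inP => y; apply: conH.
Qed.

Lemma connected_hub H h :
  (forall z, z \in vset H -> connect (radj H) h z) -> connected H.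
Proof.
move=> hub; apply/connectedE => x y /hub hx /hub hy.
by apply: connect_trans hy; rewrite connect_radjC.
Qed.

Lemma connected_small H : #|vset H| <= 1 -> connected H.
Proof.
move/card_le1P => le1; apply/connectedE => x y Hx Hy.
by move: (le1 x Hx y); rewrite Hy inE => /esym/eqP ->.
Qed.

Lemma radj_subg H K : subg H K -> subrel (radj H) (radj K).
Proof.
case/andP=> /subsetP HKv /subsetP HKe x y /and3P[Hx Hy].
by rewrite /radj !HKv // /adj => /orP[] /HKe ->; rewrite ?orbT.
Qed.

Lemma connect_subg H K x y :
  subg H K -> connect (radj H) x y -> connect (radj K) x y.
Proof. by move/radj_subg => HK; apply: connect_sub => u u' /HK/connect1. Qed.

Lemma connected_supergraph H K :
  connected H -> vset H = vset K -> eset H \subset eset K -> connected K.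
Proof.
move=> /connectedE conH eqV HKe; apply/connectedE => x y; rewrite -eqV => Hx Hy.
by apply: connect_subg (conH x y Hx Hy); rewrite /subg eqV subxx.
Qed.

Lemma radj_del H w x y :
  radj H x y -> x != w -> y != w -> radj (del_vertex H w) x y.
Proof.
case/and3P=> Hx Hy; rewrite /radj /adj /= !inE Hx Hy => xy xw yw.
by rewrite xw yw /=; case/orP: xy => ->; rewrite /= ?xw ?yw ?orbT.
Qed.

Lemma connect_del_vertex_from H w z : connect (radj (del_vertex H w)) w z -> z = w.
Proof. by case/connectP => -[|y s] //= /andP[/and3P[]]; rewrite !inE eqxx. Qed.

Lemma path_del H w x s :
  path (radj H) x s -> w \notin x :: s -> path (radj (del_vertex H w)) x s.
Proof.
elim: s x => //= y s IH x /andP[xy p_s].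
rewrite !in_cons !negb_or => /and3P[xw yw sw].
by rewrite radj_del 1?eq_sym //= IH // in_cons negb_or yw.
Qed.

(* [w] occurs at most once on a repetition-free path, so it cannot separate [z]
   from both ends. *)
Lemma connect_del_path H w x s z :
  uniq (x :: s) -> path (radj H) x s -> z \in x :: s -> z != w ->
  connect (radj (del_vertex H w)) x z \/
  connect (radj (del_vertex H w)) z (last x s).
Proof.
elim: s x => [|y s IH] x; first by rewrite inE => _ _ /eqP-> _; left.
case/andP=> xs uniq_s /= /andP[xy p_s].
case: (eqVneq z x) => [-> _ _ | zx]; first by left.
rewrite in_cons (negbTE zx) /= => sz zw.
case: (IH y uniq_s p_s sz zw) => [yz | ]; last by right.
case: (eqVneq x w) => [xw | xw].
  right; apply: connect_trans (_ : connect _ y _); first by rewrite connect_radjC.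
  by apply/connectP; exists s => //; apply: path_del; rewrite // -xw.
case: (eqVneq y w) => [yw | yw].
  by move: yz zw; rewrite yw => /connect_del_vertex_from ->; rewrite eqxx.
by left; apply: connect_trans yz; apply/connect1/radj_del.
Qed.

Lemma path_induced G S x s : path (radj G) x s ->
  all (mem S) (x :: s) -> path (radj (induced G S)) x s.
Proof.
elim: s x => //= y s IH x /andP[/and3P[_ _ xy] p_s] /and3P[Sx Sy Ss].
by rewrite IH ?Sy // andbT /radj /adj /= !inE Sx Sy !andbT.
Qed.

End Connectivity.

Section Components.
Variable V : finType.
Implicit Types (G H K : dgraph V) (S : {set V}) (x y z w : V).

Definition conn_class G x := [set y | connect (radj G) x y].

Definition conn_classes G := [set conn_class G x | x in vset G].

Lemma conn_class_eq G x y : connect (radj G) x y -> conn_class G x = conn_class G y.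
Proof.
move=> xy; apply/setP => z; rewrite !inE; apply/idP/idP; last exact: connect_trans.
by apply: connect_trans; rewrite connect_radjC.
Qed.

Lemma conn_class_sub G x : x \in vset G -> conn_class G x \subset vset G.
Proof. by move=> Gx; apply/subsetP => y; rewrite inE; apply: connect_radj_vset. Qed.

Lemma connected_conn_class G x : x \in vset G -> connected (induced G (conn_class G x)).
Proof.
move=> Gx; apply: (connected_hub (h := x)) => z; rewrite inE => /connectP[s p_s ->].
apply/connectP; exists s => //; apply: path_induced (p_s) _.
by apply/allP => u /(path_connect p_s); rewrite /= inE.
Qed.

Lemma subdigraph_conn_class H G x : subdigraph H G -> connected H ->
  x \in vset H -> subdigraph H (induced G (conn_class G x)).
Proof.
move=> HG /connectedE conH Hx; apply: subdigraph_induced => //.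
apply/subsetP => y Hy; rewrite inE.
exact: connect_subg (subdigraph_subg HG) (conH x y Hx Hy).
Qed.

Lemma component_conn_class G x :
  is_digraph G -> x \in vset G -> component (induced G (conn_class G x)) G.
Proof.
move=> wfG Gx; have Gcx := conn_class_sub Gx.
split; [exact: induced_subdigraph | exact: connected_conn_class |].
move=> H HG conH KH; apply: subdigraph_anti _ (KH).
apply: subdigraph_conn_class => //.
by case/and3P: KH => _ /subsetP KHv _; apply: KHv; rewrite /= inE connect0.
Qed.

Lemma component_classE G C x : component C G -> x \in vset G ->
  subdigraph C (induced G (conn_class G x)) -> C = induced G (conn_class G x).
Proof.
case=> _ _ maxC Gx CK; symmetry; apply: maxC CK.
  exact/induced_subdigraph/conn_class_sub.
exact: connected_conn_class.
Qed.

Lemma componentsE G x0 : is_digraph G -> x0 \in vset G ->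
  [set C | `[< component C G >]] = induced G @: conn_classes G.
Proof.
move=> wfG Gx0; apply/setP => C; rewrite inE; apply/asboolP/imsetP; last first.
  by case=> _ /imsetP[x Gx ->] ->; apply: component_conn_class.
move=> compC; have [CG conC _] := compC.
have [C0 | [x Cx]] := set_0Vmem (vset C); last first.
  have Gx : x \in vset G by case/and3P: CG => _ /subsetP CGv _; apply: CGv.
  exists (conn_class G x); first exact: imset_f.
  by apply: component_classE; rewrite ?subdigraph_conn_class.
exists (conn_class G x0); first exact: imset_f.
have [wfC _ _] := and3P CG.
apply: component_classE => //; rewrite /subdigraph wfC C0 sub0set /=.
apply/subsetP => e Ce.
by move: (is_digraphP _ wfC e Ce); rewrite C0 in_set0.
Qed.

Lemma ncompE G x0 : is_digraph G -> x0 \in vset G -> ncomp G = #|conn_classes G|.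
Proof.
by move=> wfG Gx0; rewrite /ncomp (componentsE wfG Gx0) card_imset // => S S' [].
Qed.

Lemma ncomp_connected G : is_digraph G -> connected G -> ncomp G = 1.
Proof.
move=> wfG conG; rewrite /ncomp -(cards1 G); apply: eq_card => C.
rewrite !inE; apply/asboolP/eqP => [[CG _ maxC] | ->].
  by apply/esym/maxC => //; apply: subdigraph_refl.
by split=> [||H HG _ GH]; [apply: subdigraph_refl | | apply: subdigraph_anti].
Qed.

Lemma ncomp_disconnected G : is_digraph G -> ~ connected G -> 1 < ncomp G.
Proof.
move=> wfG /connectedP /forall_inPn[x Gx /forall_inPn[y Gy not_xy]].
rewrite (ncompE wfG Gx); apply/card_gt1P; exists (conn_class G x), (conn_class G y).
split; [exact: imset_f | exact: imset_f |].
by apply: contraNneq not_xy => /setP/(_ y); rewrite !inE connect0 => ->.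
Qed.

Lemma cut_vertex_connectedE H w : is_digraph H -> connected H ->
  cut_vertex H w <-> w \in vset H /\ ~ connected (del_vertex H w).
Proof.
move=> wfH conH; have wfHw := is_digraph_del w wfH.
rewrite /cut_vertex (ncomp_connected wfH conH); split=> -[Hw cut]; split=> //.
  by move=> /(ncomp_connected wfHw) eq1; rewrite eq1 in cut.
exact: ncomp_disconnected.
Qed.

(* Classes of [G - v] map onto classes of [G] by closure in [G]; the classes of
   [a] and [b] collide. *)
Lemma ncomp_del_vertex G v a b : is_digraph G ->
  a \in vset (del_vertex G v) -> b \in vset (del_vertex G v) ->
  connect (radj G) v a -> connect (radj G) v b ->
  ~~ connect (radj (del_vertex G v)) a b -> ncomp G < ncomp (del_vertex G v).
Proof.
move=> wfG Ga Gb va vb not_ab.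
have Ga' : a \in vset G by move: Ga; rewrite !inE => /andP[].
rewrite (ncompE wfG Ga') (ncompE (is_digraph_del v wfG) Ga).
pose close (Y : {set V}) := [set z | [exists y in Y, connect (radj G) y z]].
have closeE x : close (conn_class (del_vertex G v) x) = conn_class G x.
  apply/setP => z; rewrite !inE; apply/exists_inP/idP => [[y] | xz].
    by rewrite inE => /(connect_subg (subg_del G v)); apply: connect_trans.
  by exists x; rewrite ?inE.
have -> : conn_classes G = close @: conn_classes (del_vertex G v).
  apply/setP => Y; apply/imsetP/imsetP => [[x Gx ->] | [_ /imsetP[x Gvx ->] ->]].
    case: (eqVneq x v) => [-> | xv].
      exists (conn_class (del_vertex G v) a); first exact: imset_f.
      by rewrite closeE (conn_class_eq va).
    by exists (conn_class (del_vertex G v) x); rewrite ?closeE ?imset_f // !inE xv.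
  by exists x; rewrite ?closeE //; move: Gvx; rewrite !inE => /andP[].
rewrite ltn_neqAle leq_imset_card andbT; apply: contra not_ab => /imset_injP inj_close.
have : conn_class (del_vertex G v) a = conn_class (del_vertex G v) b.
  apply: inj_close; rewrite ?imset_f // !closeE.
  by rewrite -(conn_class_eq va) -(conn_class_eq vb).
by move/setP/(_ b); rewrite !inE connect0 => ->.
Qed.

End Components.

Section Blocks.
Variable V : finType.
Implicit Types (G H K : dgraph V) (S : {set V}) (x y z w : V).

Lemma block_vset_sub B G : block B G -> vset B \subset vset G.
Proof. by case=> /and3P[]. Qed.

Lemma block_propI H : is_digraph H -> connected H ->
  (forall w, w \in vset H -> connected (del_vertex H w)) -> block_prop H.
Proof.
move=> wfH conH conHw; split=> // w /(cut_vertex_connectedE w wfH conH)[Hw []].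
exact: conHw.
Qed.

Lemma connected_del_block H w :
  is_digraph H -> block_prop H -> connected (del_vertex H w).
Proof.
move=> wfH [conH no_cut]; have [Hw | Hw] := boolP (w \in vset H); last first.
  by rewrite del_vertex_id.
apply/connectedP/negPn/negP => /connectedP not_conHw.
by apply: (no_cut w); apply/cut_vertex_connectedE.
Qed.

Lemma connect_del_block H K w x z : is_digraph H -> block_prop H -> subg H K ->
  x \in vset H -> z \in vset H -> x != w -> z != w ->
  connect (radj (del_vertex K w)) x z.
Proof.
move=> wfH bH HK Hx Hz xw zw; apply: connect_subg (subg_del2 w HK) _.
have /connectedE conHw := connected_del_block (w := w) wfH bH.
by apply: conHw; rewrite !inE ?xw ?zw.
Qed.

Lemma exists_maximal (P : dgraph V -> Prop) G H0 : P H0 -> subdigraph H0 G ->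
  exists H, [/\ P H, subdigraph H G, subdigraph H0 H &
    forall H', subdigraph H' G -> P H' -> subdigraph H H' -> H' = H].
Proof.
move=> PH0 H0G.
pose ext := [pred H | `[< P H >] && subdigraph H G && subdigraph H0 H].
pose size_of (H : dgraph V) := #|vset H| + #|eset H|.
have ext_H0 : ext H0.
  by rewrite /= H0G subdigraph_refl ?(subdigraph_wf H0G) // !andbT; apply/asboolP.
case: (arg_maxnP size_of ext_H0) => H /andP[/andP[/asboolP PH HG] H0H] maxH.
exists H; split=> // H' H'G PH' HH'.
have /maxH : ext H'.
  by rewrite /= H'G (subdigraph_trans H0H HH') !andbT; apply/asboolP.
case/and3P: HH' => _ HH'v HH'e; rewrite /size_of => le_size.
have lev := subset_leq_card HH'v; have lee := subset_leq_card HH'e.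
apply: dgraph_eq; apply/eqP; rewrite eq_sym eqEcard ?HH'v ?HH'e /=.
  by rewrite -(leq_add2r #|eset H'|) (leq_trans le_size) ?leq_add2l.
by rewrite -(leq_add2l #|vset H'|) (leq_trans le_size) ?leq_add2r.
Qed.

Lemma vertex_in_block G x : x \in vset G -> exists2 B, block B G & x \in vset B.
Proof.
move=> Gx; pose X : dgraph V := ([set x], set0).
have wfX : is_digraph X by apply/is_digraphP => e; rewrite inE.
have XG : subdigraph X G by rewrite /subdigraph wfX sub1set Gx sub0set.
have bX : block_prop X.
  apply: block_propI => //; first by apply: connected_small; rewrite cards1.
  move=> w _; apply: connected_small.
  by rewrite (leq_trans (subset_leq_card (subsetDl _ _))) ?cards1.
have [B [bB BG XB maxB]] := exists_maximal bX XG.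
by exists B; [split | case/and3P: XB => _ /subsetP XBv _; apply: XBv; rewrite inE].
Qed.

(* The subgraph induced on V(B) has no cut-vertex either, so maximality forces
   it to be B itself. *)
Lemma block_induced G B e : block B G -> e \in eset G ->
  e.1 \in vset B -> e.2 \in vset B -> e \in eset B.
Proof.
case=> BG bB maxB Ge Be1 Be2; have [wfB BGv BGe] := and3P BG.
pose K := induced G (vset B).
have BKe : eset B \subset eset K.
  apply/subsetP => f Bf; rewrite inE (subsetP BGe) //=.
  exact: is_digraphP _ wfB f Bf.
have bK : block_prop K.
  apply: block_propI; first exact: is_digraph_induced.
    exact: connected_supergraph bB.1 _ BKe.
  move=> w _; apply: connected_supergraph (connected_del_block (w := w) wfB bB) _ _ => //.
  have BK : subg B K by rewrite /subg subxx.
  by case/andP: (subg_del2 w BK).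
have <- : K = B.
  by apply: maxB bK _; [exact: induced_subdigraph | apply: subdigraph_induced].
by rewrite inE Ge Be1 Be2.
Qed.

(* With a path [s] from [a] to [b] in [G - v], the digraph [K] induced on
   B1, B2 and [s] has no cut-vertex: [K - v] is connected through [a], and
   [K - w] for [w != v] is connected through [v]. *)
Section TwoBlocks.
Variables (G B1 B2 : dgraph V) (v a b : V) (s : seq V).
Hypotheses (blockB1 : block B1 G) (blockB2 : block B2 G).
Hypotheses (B1v : v \in vset B1) (B2v : v \in vset B2).
Hypotheses (B1a : a \in vset B1) (av : a != v) (B2b : b \in vset B2) (bv : b != v).
Hypotheses (uniq_s : uniq (a :: s)) (path_s : path (radj (del_vertex G v)) a s).
Hypothesis last_s : last a s = b.

Let W := vset B1 :|: vset B2 :|: [set z in a :: s].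
Let K := induced G W.

Let s_del : all (mem (vset (del_vertex G v))) (a :: s).
Proof.
by rewrite /= (path_radj_vset path_s) !inE av (subsetP (block_vset_sub blockB1)).
Qed.

Let v_notin_s : v \notin a :: s.
Proof. by apply/negP => /(allP s_del); rewrite !inE eqxx. Qed.

Let block_sub_K B : block B G -> vset B \subset W -> subdigraph B K.
Proof. by case=> BG _ _ BW; apply: subdigraph_induced. Qed.

Let B1K : subdigraph B1 K.
Proof. by apply: block_sub_K => //; apply/subsetP => z Bz; rewrite !inE Bz. Qed.

Let B2K : subdigraph B2 K.
Proof. by apply: block_sub_K => //; apply/subsetP => z Bz; rewrite !inE Bz orbT. Qed.

Let W_sub : W \subset vset G.
Proof.
apply/subsetP => z; rewrite !inE => /orP[/orP[B1z | B2z] | sz].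
- exact: (subsetP (block_vset_sub blockB1)).
- exact: (subsetP (block_vset_sub blockB2)).
- by have := allP s_del z sz; rewrite !inE => /andP[].
Qed.

Let path_K_del : path (radj (del_vertex K v)) a s.
Proof.
apply: path_del v_notin_s; apply: path_induced.
  exact: sub_path (radj_subg (subg_del G v)) _ _ path_s.
by apply/allP => z sz; rewrite /= /W !in_setU [z \in [set _ in _]]inE sz !orbT.
Qed.

Let block_connect_del B w x z : block B G -> subdigraph B K ->
  x \in vset B -> z \in vset B -> x != w -> z != w ->
  connect (radj (del_vertex K w)) x z.
Proof.
case=> BG bB _ BK; apply: connect_del_block (subdigraph_wf BG) bB (subdigraph_subg BK).
Qed.

Let connect_del_v z : z \in W -> z != v -> connect (radj (del_vertex K v)) a z.
Proof.
rewrite !inE => /orP[/orP[B1z | B2z] | sz] zv.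
- exact: block_connect_del blockB1 B1K B1a B1z av zv.
- apply: connect_trans _ (block_connect_del blockB2 B2K B2b B2z bv zv).
  by apply/connectP; exists s.
- exact: path_connect path_K_del _ sz.
Qed.

Let connect_del_other w z : w != v -> z \in W -> z != w ->
  connect (radj (del_vertex K w)) v z.
Proof.
rewrite eq_sym => vw; rewrite !inE => /orP[/orP[B1z | B2z] | sz] zw.
- exact: block_connect_del blockB1 B1K B1v B1z vw zw.
- exact: block_connect_del blockB2 B2K B2v B2z vw zw.
have path_K : path (radj K) a s.
  exact: sub_path (radj_subg (subg_del K v)) _ _ path_K_del.
case: (connect_del_path uniq_s path_K sz zw) => [az | zb].
  case: (eqVneq a w) => [aw | aw].
    by move: az zw; rewrite aw => /connect_del_vertex_from ->; rewrite eqxx.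
  exact: connect_trans (block_connect_del blockB1 B1K B1v B1a vw aw) az.
rewrite last_s connect_radjC in zb; case: (eqVneq b w) => [bw | bw].
  by move: zb zw; rewrite bw => /connect_del_vertex_from ->; rewrite eqxx.
exact: connect_trans (block_connect_del blockB2 B2K B2v B2b vw bw) zb.
Qed.

Let block_prop_K : block_prop K.
Proof.
apply: block_propI; first exact: is_digraph_induced.
  apply: (connected_hub (h := v)) => z Kz.
  case: (eqVneq z v) => [-> // | zv].
  case: (blockB1) => _ [/connectedE conB1 _] _.
  apply: connect_trans (connect_subg (subdigraph_subg B1K) (conB1 v a B1v B1a)) _.
  exact: connect_subg (subg_del K v) (connect_del_v Kz zv).
move=> w Kw; case: (eqVneq w v) => [-> | wv].
  by apply: (connected_hub (h := a)) => z /setD1P[zv /connect_del_v]; apply.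
by apply: (connected_hub (h := v)) => z /setD1P[zw /(connect_del_other wv)]; apply.
Qed.

Lemma two_blocks_eq : B1 = B2.
Proof.
case: blockB1 => _ _ maxB1; case: blockB2 => _ _ maxB2.
have KG : subdigraph K G := induced_subdigraph W_sub.
by rewrite -(maxB1 K KG block_prop_K B1K) (maxB2 K KG block_prop_K B2K).
Qed.

End TwoBlocks.

Lemma block_other_vertex G B1 B2 v : block B1 G -> block B2 G -> B1 <> B2 ->
  v \in vset B1 -> v \in vset B2 -> exists2 a, a \in vset B1 & a != v.
Proof.
move=> blockB1 blockB2 neqB B1v B2v.
case/boolP: [exists a in vset B1, a != v] => [/exists_inP[a] | /exists_inPn only_v].
  by exists a.
have eq_v z : z \in vset B1 -> z = v by move/only_v; rewrite negbK => /eqP.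
case: neqB; case: (blockB1) => B1G _ maxB1; apply/esym/maxB1; first by case: blockB2.
  by case: blockB2.
case/and3P: B1G => wfB1 _ /subsetP B1Ge.
rewrite /subdigraph wfB1 /=; apply/andP; split; apply/subsetP; first by move=> z /eq_v ->.
move=> e B1e.
have /andP[/eq_v e1 /eq_v e2] := is_digraphP _ wfB1 e B1e.
by apply: block_induced blockB2 (B1Ge e B1e) _ _; rewrite ?e1 ?e2.
Qed.

Lemma cut_vertex_two_blocks G B1 B2 v : is_digraph G ->
  block B1 G -> block B2 G -> B1 <> B2 ->
  v \in vset B1 -> v \in vset B2 -> cut_vertex G v.
Proof.
move=> wfG blockB1 blockB2 neqB B1v B2v.
have [a B1a av] := block_other_vertex blockB1 blockB2 neqB B1v B2v.
have [b B2b bv] := block_other_vertex blockB2 blockB1 (nesym neqB) B2v B1v.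
have block_connect B x y :
    block B G -> x \in vset B -> y \in vset B -> connect (radj G) x y.
  case=> BG [/connectedE conB _] _ Bx By.
  exact: connect_subg (subdigraph_subg BG) (conB x y Bx By).
have Gv := subsetP (block_vset_sub blockB1) v B1v.
split=> //; apply: (ncomp_del_vertex wfG (a := a) (b := b)).
- by rewrite !inE av (subsetP (block_vset_sub blockB1)).
- by rewrite !inE bv (subsetP (block_vset_sub blockB2)).
- exact: block_connect blockB1 B1v B1a.
- exact: block_connect blockB2 B2v B2b.
apply/negP => /connectP[s p_s b_last].
case/shortenP: p_s b_last => s' p_s' uniq_s' _ /esym last_s'.
exact: neqB (two_blocks_eq blockB1 blockB2 B1v B2v B1a av B2b bv uniq_s' p_s' last_s').
Qed.

Lemma cut_index_non_cut G v : is_digraph G -> v \in vset G ->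
  ~ cut_vertex G v -> cut_index G v = 1.
Proof.
move=> wfG Gv not_cut; apply/eqP; rewrite eqn_leq; apply/andP; split.
  rewrite leqNgt; apply/negP => /card_gt1P[B1 [B2 []]].
  rewrite !inE => /andP[/asboolP blockB1 B1v] /andP[/asboolP blockB2 B2v] /eqP neqB.
  exact: not_cut (cut_vertex_two_blocks wfG blockB1 blockB2 neqB B1v B2v).
have [B blockB Bv] := vertex_in_block Gv.
by apply/card_gt0P; exists B; rewrite inE Bv andbT; apply/asboolP.
Qed.

End Blocks.

Section BlockChoices.
Variables (V : finType) (G : dgraph V) (k : nat) (B : 'I_k -> dgraph V).
Hypothesis Bblock : forall i, block (B i) G.

(* The possible parts for [v]; vertices outside G get the dummy choice [None]. *)
Definition blocks_at (v : V) : {set option 'I_k} :=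
  if v \in vset G then Some @: [set i | v \in vset (B i)] else [set None].

Definition block_choices := setXn blocks_at.

Definition parts_of_choice (a : {ffun V -> option 'I_k}) : {ffun 'I_k -> dgraph V} :=
  [ffun i => induced G [set v | a v == Some i]].

Lemma block_choice_Some a v i :
  a \in block_choices -> a v = Some i -> v \in vset (B i).
Proof.
move/setXnP/(_ v); rewrite /blocks_at => + av; rewrite av.
by case: ifP => _; rewrite ?inE // => /imsetP[j]; rewrite inE => Bj [->].
Qed.

Lemma block_choice_vset a v : a \in block_choices -> v \in vset G -> a v != None.
Proof. by move=> /setXnP/(_ v) + Gv; rewrite /blocks_at Gv => /imsetP[i _ ->]. Qed.

Lemma B_partition_parts_of_choice a :
  a \in block_choices -> B_partition G B (parts_of_choice a).
Proof.
move=> choice_a; apply/and3P; split.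
- apply/forallP => i; rewrite ffunE; set S := [set v | a v == Some i].
  have SB : S \subset vset (B i).
    by apply/subsetP => v; rewrite inE => /eqP /(block_choice_Some choice_a).
  have SG := subset_trans SB (block_vset_sub (Bblock i)).
  rewrite /induced_sub induced_subdigraph //= /subdigraph is_digraph_induced SB /=.
  apply/andP; split.
    apply/forall_inP => u Su; apply/forall_inP => w Sw.
    by apply/implyP => uw; rewrite inE uw Su Sw.
  apply/subsetP => e; rewrite inE => /and3P[Ge Se1 Se2].
  by apply: block_induced (Bblock i) Ge _ _; apply: (subsetP SB).
- apply/forallP => i; apply/forallP => j; apply/implyP => ij; rewrite !ffunE /=.
  rewrite disjoints_subset; apply/subsetP => v; rewrite !inE => /eqP->.
  by apply: contra ij => /eqP[->].
- apply/eqP/setP => v; apply/bigcupP/idP => [[i _] | Gv].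
    rewrite ffunE inE => /eqP /(block_choice_Some choice_a).
    exact: (subsetP (block_vset_sub (Bblock i))).
  case Eav: (a v) (block_choice_vset choice_a Gv) => [i|] // _.
  by exists i; rewrite // ffunE inE Eav.
Qed.

Lemma B_partition_choice P :
  B_partition G B P -> exists2 a, a \in block_choices & P = parts_of_choice a.
Proof.
case/and3P=> /forallP P_sub /forallP P_disj /eqP P_cover.
have PG i : vset (P i) \subset vset G by case/andP: (P_sub i) => /andP[/and3P[]].
have part_uniq i j v : v \in vset (P i) -> v \in vset (P j) -> i = j.
  move=> Piv Pjv; apply/eqP; apply: contraTT Pjv => ij.
  by rewrite (disjointFr (implyP (forallP (P_disj i) j) ij) Piv).
pose a : {ffun V -> option 'I_k} := [ffun v => [pick i | v \in vset (P i)]].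
have aE v i : (a v == Some i) = (v \in vset (P i)).
  rewrite ffunE; case: pickP => [j Pjv | noP]; last by rewrite noP.
  by apply/eqP/idP => [[<-] // | /(part_uniq _ _ _ Pjv) ->].
exists a.
  apply/setXnP => v; rewrite /blocks_at; case: ifP => [Gv | notGv].
    have /bigcupP[i _ Piv] : v \in \bigcup_(i < k) vset (P i) by rewrite P_cover.
    rewrite (eqP (_ : a v == Some i)) ?aE // imset_f // inE.
    by case/andP: (P_sub i) => _ /and3P[_ /subsetP PBv _]; apply: PBv.
  rewrite ffunE; case: pickP => [j Pjv | _]; last by rewrite inE.
  by rewrite (subsetP (PG j) _ Pjv) in notGv.
apply/ffunP => i; rewrite ffunE; have /andP[/andP[/and3P[wfPi _ PGe] indP] _] := P_sub i.
apply: dgraph_eq => /=; first by apply/setP => v; rewrite inE aE.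
apply/setP => -[x y]; rewrite !inE !aE /=.
apply/idP/and3P => [Pe | [Ge Px Py]].
  by have /andP[] := is_digraphP _ wfPi _ Pe; rewrite (subsetP PGe).
by have /implyP := forall_inP (forall_inP indP x Px) y Py; apply.
Qed.

Lemma parts_of_choice_inj : injective parts_of_choice.
Proof.
move=> a a' eq_parts; apply/ffunP => v.
have eq_at i : (a v == Some i) = (a' v == Some i).
  by have /ffunP/(_ i)/(congr1 (fun H => v \in vset H)) := eq_parts; rewrite !ffunE !inE.
case Ea: (a v) => [i|]; case Ea': (a' v) => [j|] //.
- by have := eq_at i; rewrite Ea Ea' eqxx => /esym/eqP.
- by have := eq_at i; rewrite Ea Ea' eqxx.
- by have := eq_at j; rewrite Ea Ea' eqxx.
Qed.

Lemma card_B_partitions :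
  #|[set P | B_partition G B P]| = \prod_v #|blocks_at v|.
Proof.
have -> : [set P | B_partition G B P] = parts_of_choice @: block_choices.
  apply/setP => P; rewrite inE; apply/idP/imsetP => [/B_partition_choice[a] | [a + ->]].
    by exists a.
  exact: B_partition_parts_of_choice.
by rewrite card_imset ?cardsXn //; apply: parts_of_choice_inj.
Qed.

End BlockChoices.

Lemma card_blocks_at (V : finType) (G : dgraph V) k (B : 'I_k -> dgraph V) v :
  injective B -> (forall H, block H G <-> exists i, H = B i) ->
  #|blocks_at G B v| = if v \in vset G then cut_index G v else 1.
Proof.
move=> Binj Bblocks; rewrite /blocks_at; case: ifP => _; last exact: cards1.
rewrite card_imset; last by move=> i j [].
rewrite /cut_index -(card_imset _ Binj); apply: eq_card => H; rewrite !inE.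
apply/imsetP/andP => [[i Biv ->] | [/asboolP/Bblocks[i ->] Biv]].
  by split; [apply/asboolP/Bblocks; exists i | rewrite inE in Biv].
by exists i; rewrite ?inE.
Qed.

Theorem mainTheorem1 (V : finType) (G : dgraph V) (HG : is_digraph G)
    (k : nat) (B : 'I_k -> dgraph V) (Binj : injective B)
    (Bblocks : forall H : dgraph V, block H G <-> exists i, H = B i)
    (t : nat) (c : 'I_t -> V) (cinj : injective c)
    (ccut : forall v : V, cut_vertex G v <-> exists j, v = c j) :
  #|[set P : {ffun 'I_k -> dgraph V} | B_partition G B P]|
    = \prod_(j < t) cut_index G (c j).
Proof.
rewrite card_B_partitions; last by move=> i; apply/Bblocks; exists i.
rewrite (bigID (mem (c @: [set: 'I_t]))) /= [X in _ * X]big1 ?muln1 => [|v].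
  rewrite big_imset /=; last by move=> i j _ _ /cinj.
  apply: eq_big => [j | j _]; first by rewrite inE.
  have [Gcj _] : cut_vertex G (c j) by apply/ccut; exists j.
  by rewrite card_blocks_at // Gcj.
rewrite card_blocks_at //; case: ifP => // Gv not_cut.
apply: cut_index_non_cut => // /ccut[j vj].
by rewrite vj imset_f ?inE in not_cut.
Qed.
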